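(* Let $\theta^{\circ}_1,\dots,\theta^{\circ}_m\in\mathbb{S}^{d-1}$ be pairwise orthogonal, let $a,b$ be as below, and for $x\in\mathbb{S}^{d-1}$ define $$q(x)=ad\sum_{j=1}^m\sigma(\langle\theta^{\circ}_j,x\rangle)+bd\sum_{j_1=1}^m\sum_{j_2=1}^m\langle\theta^{\circ}_{j_1},x\rangle\mathbb{1}\{\langle\theta^{\circ}_{j_2},x\rangle\ge0\}$$ (equivalently $q(x)=(x^\top\mathbb{1}\{\langle\theta^{\circ}_1,x\rangle\ge0\},\dots,x^\top\mathbb{1}\{\langle\theta^{\circ}_m,x\rangle\ge0\})\,\big(\mathbb{E}[\tfrac1nX_0X_0^\top]\big)^{-1}(\theta^{\circ}_1;\dots;\theta^{\circ}_m)$). Then $0\le q(x)\le(a-bm)d\sqrt m$ for every $x\in\mathbb{S}^{d-1}$.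
   Context: $\sigma(u)=\max\{u,0\}$; $a=\frac{2\pi(\pi m+\pi+2)}{D}$, $b=-\frac{2\pi^2}{D}$ with $D=2\pi m^2+(\pi^2-2\pi+4)m+\pi^2+4\pi-4$. $X_0\in\mathbb{R}^{md\times n}$ has $i$-th column $(x_i\mathbb{1}\{\langle\theta^{\circ}_1,x_i\rangle\ge0\};\dots;x_i\mathbb{1}\{\langle\theta^{\circ}_m,x_i\rangle\ge0\})$ with $x_i$ i.i.d. uniform on $\mathbb{S}^{d-1}$. *)

From HB Require Import structures.
From mathcomp Require Import all_boot all_order all_algebra.
From mathcomp Require Import all_classical all_reals all_analysis.
Set Implicit Arguments. Unset Strict Implicit. Unset Printing Implicit Defensive.
Import Order.TTheory GRing.Theory Num.Theory.
Local Open Scope ring_scope.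

Definition dotv {R : realType} {d : nat} (u v : 'rV[R]_d) : R :=
  \sum_(i < d) u 0 i * v 0 i.

Definition on_sphere {R : realType} {d : nat} (x : 'rV[R]_d) : Prop :=
  dotv x x = 1.

Definition relu {R : realType} (u : R) : R := Num.max u 0.

Definition ind_nonneg {R : realType} (u : R) : R := if 0 <= u then 1 else 0.

Definition Dconst {R : realType} (m : nat) : R :=
  2 * pi * (m%:R) ^+ 2 + (pi ^+ 2 - 2 * pi + 4) * m%:R + pi ^+ 2 + 4 * pi - 4.

Definition aconst {R : realType} (m : nat) : R :=
  2 * pi * (pi * m%:R + pi + 2) / Dconst m.

Definition bconst {R : realType} (m : nat) : R :=
  - (2 * pi ^+ 2) / Dconst m.

Definition qfun {R : realType} {m d : nat} (th : 'I_m -> 'rV[R]_d) (x : 'rV[R]_d) : R :=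
  aconst m * d%:R * \sum_(j < m) relu (dotv (th j) x)
  + bconst m * d%:R * \sum_(j1 < m) \sum_(j2 < m)
      dotv (th j1) x * ind_nonneg (dotv (th j2) x).

From HB Require Import structures.
From mathcomp Require Import all_boot all_order all_algebra.
From mathcomp Require Import all_classical all_reals all_analysis.
From mathcomp Require Import ring lra.
Set Implicit Arguments. Unset Strict Implicit. Unset Printing Implicit Defensive.
Import Order.TTheory GRing.Theory Num.Theory.
Local Open Scope ring_scope.

(* Write c_j = <th_j, x>.  Since the th_j are orthonormal,
   Bessel's inequality gives  sum_j c_j^2 <= |x|^2 = 1, hence by
   Cauchy-Schwarz  sum_j |c_j| <= sqrt m.  The double sum in q factors as
   (sum_j c_j) * K with K = #{j | c_j >= 0} in [0, m], and splitting
   c_j = relu c_j - relu (-c_j) gives, with P = sum relu c_j and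
   N = sum relu (-c_j),
        q / d = a P + b (P - N) K,     P + N = sum_j |c_j|.
   Since b <= 0 and a + b m > 0, this expression is a combination of P, N
   with nonnegative coefficients, and is at most (a - b m)(P + N). *)

Section InnerProduct.
Variables (R : realType) (d : nat).
Implicit Types (u v w : 'rV[R]_d).

Lemma dotvC u v : dotv u v = dotv v u.
Proof. by apply: eq_bigr => i _; rewrite mulrC. Qed.

Lemma dotvBl u v w : dotv (u - v) w = dotv u w - dotv v w.
Proof. by rewrite /dotv -sumrB; apply: eq_bigr => i _; rewrite !mxE mulrBl. Qed.

Lemma dotv_suml (I : finType) (f : I -> R) (g : I -> 'rV[R]_d) w :
  dotv (\sum_j f j *: g j) w = \sum_j f j * dotv (g j) w.
Proof.
rewrite /dotv; under eq_bigr => i _ do rewrite summxE big_distrl /=.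
rewrite exchange_big /=; apply: eq_bigr => j _.
by rewrite big_distrr /=; apply: eq_bigr => i _; rewrite !mxE mulrA.
Qed.

Lemma dotv_ge0 u : 0 <= dotv u u.
Proof. by apply: sumr_ge0 => i _; rewrite -expr2 sqr_ge0. Qed.

End InnerProduct.

(* Bessel's inequality: the coordinates of a unit vector along an orthonormal
   family have square sum at most 1.  It follows from |x - s|^2 >= 0 for the
   orthogonal projection s = sum_j <th_j, x> th_j. *)
Lemma bessel (R : realType) (m d : nat) (th : 'I_m -> 'rV[R]_d)
  (hunit : forall j, on_sphere (th j))
  (horth : forall j1 j2, j1 != j2 -> dotv (th j1) (th j2) = 0)
  (x : 'rV[R]_d) (hx : on_sphere x) :
  \sum_j (dotv (th j) x) ^+ 2 <= 1.
Proof.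
set s := \sum_j dotv (th j) x *: th j.
have sx : dotv s x = \sum_j (dotv (th j) x) ^+ 2.
  by rewrite /s dotv_suml; apply: eq_bigr => j _; rewrite expr2.
have ss : dotv s s = \sum_j (dotv (th j) x) ^+ 2.
  rewrite {1}/s dotv_suml; apply: eq_bigr => j _.
  rewrite [dotv (th j) s]dotvC /s dotv_suml (bigD1 j) //= big1 ?addr0.
    by rewrite dotvC hunit mulr1 expr2.
  by move=> k hk; rewrite dotvC horth ?mulr0 // eq_sym.
have := dotv_ge0 (x - s).
rewrite dotvBl [dotv x (x - s)]dotvC [dotv s (x - s)]dotvC !dotvBl.
rewrite [dotv x s]dotvC sx ss hx; lra.
Qed.

(* Cauchy-Schwarz for sums: (sum_j a_j)^2 <= m sum_j a_j^2, obtained from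
   the nonnegativity of sum_{i,j} (a_i - a_j)^2. *)
Lemma sqr_sum_le (R : realType) (m : nat) (a : 'I_m -> R) :
  (\sum_j a j) ^+ 2 <= m%:R * \sum_j a j ^+ 2.
Proof.
have pairs_ge0 : 0 <= \sum_i \sum_j (a i - a j) ^+ 2.
  by apply: sumr_ge0 => i _; apply: sumr_ge0 => j _; apply: sqr_ge0.
have expand : \sum_(i < m) \sum_(j < m) (a i - a j) ^+ 2 =
    2 * (m%:R * \sum_j a j ^+ 2) - 2 * (\sum_j a j) ^+ 2.
  have sq : (\sum_j a j) ^+ 2 = \sum_i \sum_j a i * a j.
    by rewrite expr2 big_distrl /=; apply: eq_bigr => i _; rewrite big_distrr.
  have msum : m%:R * \sum_j a j ^+ 2 = \sum_(i < m) \sum_(j < m) a j ^+ 2.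
    by rewrite sumr_const card_ord mulr_natl.
  have msum' : m%:R * \sum_j a j ^+ 2 = \sum_(i < m) \sum_(j < m) a i ^+ 2.
    by rewrite mulr_sumr; apply: eq_bigr => i _; rewrite sumr_const card_ord mulr_natl.
  rewrite sq mulr2n mulrDl mul1r {1}msum' msum !mulr_sumr -!big_split -sumrB /=.
  apply: eq_bigr => i _; rewrite !mulr_sumr -!big_split -sumrB /=.
  by apply: eq_bigr => j _; ring.
by rewrite expand in pairs_ge0; lra.
Qed.

Lemma sum_abs_le_sqrt (R : realType) (m : nat) (c : 'I_m -> R) :
  \sum_j c j ^+ 2 <= 1 -> \sum_j `|c j| <= Num.sqrt m%:R.
Proof.
move=> sq_le1.
have T0 : 0 <= \sum_j `|c j| by apply: sumr_ge0.
rewrite -(ger0_norm T0) -sqrtr_sqr; apply: ler_wsqrtr.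
apply: (le_trans (sqr_sum_le (fun j => `|c j|))).
under eq_bigr => j _ do rewrite real_normK ?num_real //.
by rewrite -[leRHS]mulr1 ler_wpM2l.
Qed.

Lemma relu_ge0 (R : realType) (u : R) : 0 <= relu u.
Proof. by rewrite /relu le_max lexx orbT. Qed.

Lemma relu_sub (R : realType) (u : R) : relu u - relu (- u) = u.
Proof. by rewrite /relu; case: (leP 0 u) => h; case: (leP 0 (- u)) => h'; lra. Qed.

Lemma relu_add (R : realType) (u : R) : relu u + relu (- u) = `|u|.
Proof.
rewrite /relu; case: (leP 0 u) => h; case: (leP 0 (- u)) => h'.
- by rewrite ger0_norm //; lra.
- by rewrite ger0_norm //; lra.
- by rewrite ltr0_norm //; lra.
- lra.
Qed.

Lemma ind_nonneg_ge0 (R : realType) (u : R) : 0 <= ind_nonneg u.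
Proof. by rewrite /ind_nonneg; case: ifP. Qed.

Lemma ind_nonneg_le1 (R : realType) (u : R) : ind_nonneg u <= 1.
Proof. by rewrite /ind_nonneg; case: ifP. Qed.

(* D > 0: it equals 2 pi m^2 + ((pi - 1)^2 + 3) m + (pi - 2)(pi + 6) + 8,
   whose terms are nonnegative since pi >= 2. *)
Lemma Dconst_gt0 (R : realType) (m : nat) : 0 < Dconst m :> R.
Proof.
have pi2 : (2 : R) <= pi by apply: pi_ge2.
have quad : 0 <= pi * m%:R ^+ 2 :> R by rewrite mulr_ge0 ?sqr_ge0 //; lra.
have lin : 0 <= ((pi - 1) ^+ 2 + 3) * m%:R :> R by rewrite mulr_ge0 ?addr_ge0 ?sqr_ge0.
have cst : 0 <= (pi - 2) * (pi + 6) :> R by rewrite mulr_ge0 //; lra.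
rewrite /Dconst; nra.
Qed.

Lemma bconst_le0 (R : realType) (m : nat) : bconst m <= 0 :> R.
Proof.
rewrite /bconst mulNr oppr_le0; apply: mulr_ge0.
  by rewrite mulr_ge0 ?sqr_ge0.
by rewrite invr_ge0 ltW ?Dconst_gt0.
Qed.

Lemma aconst_bconst_gt0 (R : realType) (m : nat) : 0 < aconst m + bconst m * m%:R :> R.
Proof.
have pi2 : (2 : R) <= pi by apply: pi_ge2.
have -> : aconst m + bconst m * m%:R = 2 * pi * (pi + 2) / Dconst m :> R.
  by rewrite /aconst /bconst; field; apply: lt0r_neq0; apply: Dconst_gt0.
by rewrite divr_gt0 ?Dconst_gt0 // mulr_gt0 ?mulr_gt0 //; lra.
Qed.

Lemma split_form_bounds (R : realType) (a b M P N K : R) :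
  b <= 0 -> 0 <= a + b * M -> 0 <= P -> 0 <= N -> 0 <= K -> K <= M ->
  0 <= a * P + b * ((P - N) * K) <= (a - b * M) * (P + N).
Proof.
move=> b_le0 abM_ge0 P0 N0 K0 KM.
have bMK : 0 <= - b * (M - K) by rewrite mulr_ge0 //; lra.
have aK : 0 <= a + b * K by lra.
have bK : 0 <= - b * K by rewrite mulr_ge0 //; lra.
have bMK' : 0 <= - b * (M + K) by rewrite mulr_ge0 //; lra.
apply/andP; split.
- have -> : a * P + b * ((P - N) * K) = (a + b * K) * P + (- b * K) * N by ring.
  by rewrite addr_ge0 // mulr_ge0.
- rewrite -subr_ge0.
  have -> : (a - b * M) * (P + N) - (a * P + b * ((P - N) * K)) =
      (- b * (M + K)) * P + ((a + b * K) + - b * M) * N by ring.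
  rewrite addr_ge0 // mulr_ge0 //.
  have : 0 <= - b * M by rewrite mulr_ge0 //; lra.
  lra.
Qed.

Definition relu_form (R : realType) (m : nat) (a b : R) (c : 'I_m -> R) : R :=
  a * \sum_j relu (c j) + b * ((\sum_j c j) * \sum_j ind_nonneg (c j)).

Lemma qfunE (R : realType) (m d : nat) (th : 'I_m -> 'rV[R]_d) (x : 'rV[R]_d) :
  qfun th x = d%:R * relu_form (aconst m) (bconst m) (fun j => dotv (th j) x).
Proof.
set c := fun j => dotv (th j) x.
have double_sum : \sum_j1 \sum_j2 c j1 * ind_nonneg (c j2) =
    (\sum_j c j) * \sum_j ind_nonneg (c j).
  by rewrite big_distrl /=; apply: eq_bigr => j _; rewrite big_distrr.
rewrite /qfun /relu_form -/c double_sum; ring.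
Qed.

Lemma relu_form_bounds (R : realType) (m : nat) (a b : R) (c : 'I_m -> R) :
  b <= 0 -> 0 <= a + b * m%:R ->
  0 <= relu_form a b c <= (a - b * m%:R) * \sum_j `|c j|.
Proof.
move=> b_le0 abm_ge0.
have sumE : \sum_j c j = \sum_j relu (c j) - \sum_j relu (- c j).
  by rewrite -sumrB; apply: eq_bigr => j _; rewrite relu_sub.
have absE : \sum_j `|c j| = \sum_j relu (c j) + \sum_j relu (- c j).
  by rewrite -big_split; apply: eq_bigr => j _; rewrite /= relu_add.
have K_le_m : \sum_j ind_nonneg (c j) <= m%:R.
  have -> : (m%:R : R) = \sum_(j < m) 1 by rewrite sumr_const card_ord.
  by apply: ler_sum => j _; apply: ind_nonneg_le1.
rewrite /relu_form sumE absE; apply: split_form_bounds => //.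
- by apply: sumr_ge0 => j _; apply: relu_ge0.
- by apply: sumr_ge0 => j _; apply: relu_ge0.
- by apply: sumr_ge0 => j _; apply: ind_nonneg_ge0.
Qed.

Theorem mainTheorem6 (R : realType) (m d : nat) (th : 'I_m -> 'rV[R]_d)
  (hunit : forall j, on_sphere (th j))
  (horth : forall j1 j2, j1 != j2 -> dotv (th j1) (th j2) = 0)
  (x : 'rV[R]_d) (hx : on_sphere x) :
  0 <= qfun th x /\
  qfun th x <= (aconst m - bconst m * m%:R) * d%:R * Num.sqrt (m%:R).
Proof.
set c := fun j => dotv (th j) x.
have b_le0 := @bconst_le0 R m.
have abm_gt0 := @aconst_bconst_gt0 R m.
have /andP[q_ge0 q_le] := relu_form_bounds c b_le0 (ltW abm_gt0).
have l1_le : \sum_j `|c j| <= Num.sqrt m%:R.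
  exact/sum_abs_le_sqrt/(bessel hunit horth hx).
have ambm_ge0 : 0 <= aconst m - bconst m * m%:R :> R.
  have : 0 <= - bconst m * m%:R :> R by rewrite mulr_ge0 //; lra.
  lra.
rewrite qfunE -/c; split; first exact: mulr_ge0.
rewrite [leRHS]mulrAC [leRHS]mulrC.
have d_ge0 : 0 <= d%:R :> R by [].
apply: (ler_wpM2l d_ge0).
exact: le_trans q_le (ler_wpM2l ambm_ge0 l1_le).
Qed.
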